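(* Let $x_0\in\mathbb{R}^2$, $r_0>0$, and let $K$ be a relatively closed subset of $B(x_0,r_0)$ that contains $x_0$. Let $\varepsilon>0$. If $E$ is a relatively closed subset of $B(x_0,r_0)$ such that $K\subset E$, $E$ separates $B(x_0,r_0)$, $$\beta_E(x_0,r_0)\le\varepsilon\quad\text{and}\quad r_0^{-1}\mathcal{H}^1(E\setminus K)\le\varepsilon,$$ then $\beta^{\rm bil}_K(x_0,r_0)\le4\varepsilon$.
   Context: $B(x,r)$ is the open ball. For a set $F$ with $x_0\in F$: $\beta_F(x_0,r_0)=r_0^{-1}\inf_\ell\sup_{y\in F\cap B(x_0,r_0)}\mathrm{dist}(y,\ell)$ and $\beta^{\rm bil}_F(x_0,r_0)=r_0^{-1}\inf_\ell\max\{\sup_{y\in F\cap B(x_0,r_0)}\mathrm{dist}(y,\ell),\sup_{y\in\ell\cap B(x_0,r_0)}\mathrm{dist}(y,F)\}$, infima over lines $\ell$ through $x_0$. With $\nu$ a unit normal of a line attaining the infimum in $\beta_F(x_0,r_0)$ and $D^\pm_t=\{z\in B(x_0,r_0):\pm(z-x_0)\cdot\nu>t\}$, $F$ separates $B(x_0,r_0)$ if $\beta:=\beta_F(x_0,r_0)\le1/2$ and $D^+_{\beta r_0}$, $D^-_{\beta r_0}$ lie in distinct connected components of $B(x_0,r_0)\setminus F$. *)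

From HB Require Import structures.
From mathcomp Require Import all_boot all_order all_algebra.
From mathcomp Require Import all_classical all_reals all_analysis.
Set Implicit Arguments. Unset Strict Implicit. Unset Printing Implicit Defensive.
Import Order.TTheory GRing.Theory Num.Theory.
Import numFieldNormedType.Exports.
Local Open Scope classical_set_scope.
Local Open Scope ring_scope.

Section Plane.
Variable R : realType.
Notation P := (R * R)%type.

Definition edist (p q : P) : R :=
  Num.sqrt ((p.1 - q.1) ^+ 2 + (p.2 - q.2) ^+ 2).

Definition dotd (p x0 v : P) : R := (p.1 - x0.1) * v.1 + (p.2 - x0.2) * v.2.

Definition oball (x : P) (r : R) : set P := [set p | edist x p < r].

Definition dist_set (y : P) (S : set P) : R := inf [set edist y z | z in S].

Definition line (x0 u : P) : set P :=
  [set p | exists t : R, p = (x0.1 + t * u.1, x0.2 + t * u.2)].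

Definition one_sided_dev (F : set P) (x0 : P) (r0 : R) (u : P) : R :=
  sup [set dist_set y (line x0 u) | y in F `&` oball x0 r0].

Definition bil_dev (F : set P) (x0 : P) (r0 : R) (u : P) : R :=
  Num.max (one_sided_dev F x0 r0 u)
          (sup [set dist_set y F | y in line x0 u `&` oball x0 r0]).

(* lines through x0 are indexed by nonzero direction vectors u *)
Definition beta (F : set P) (x0 : P) (r0 : R) : R :=
  r0^-1 * inf [set one_sided_dev F x0 r0 u | u in [set u : P | u != 0]].

Definition beta_bil (F : set P) (x0 : P) (r0 : R) : R :=
  r0^-1 * inf [set bil_dev F x0 r0 u | u in [set u : P | u != 0]].

Definition separates (F : set P) (x0 : P) (r0 : R) : Prop :=
  let b := beta F x0 r0 in
  b <= 2^-1 /\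
  exists u nu : P,
    [/\ u != 0,
        one_sided_dev F x0 r0 u = inf [set one_sided_dev F x0 r0 w | w in [set w : P | w != 0]],
        nu.1 ^+ 2 + nu.2 ^+ 2 = 1,
        nu.1 * u.1 + nu.2 * u.2 = 0 &
        (* D^+_{b r0} and D^-_{b r0} lie in distinct connected components
           of B(x0,r0) \ F *)
        let Dp := [set z | oball x0 r0 z /\ dotd z x0 nu > b * r0] in
        let Dm := [set z | oball x0 r0 z /\ - dotd z x0 nu > b * r0] in
        ~ (exists C : set P, [/\ C `<=` oball x0 r0 `\` F, connected C,
                                 C `&` Dp !=set0 & C `&` Dm !=set0])].

Definition rel_closed (K U : set P) : Prop :=
  exists C : set P, closed C /\ K = C `&` U.

(* diameter (0 for the empty set, +oo for unbounded sets) *)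
Definition ediam (S : set P) : \bar R :=
  ereal_sup ([set 0%E] `|` [set (edist p q)%:E | p in S & q in S]).

(* 1-dimensional Hausdorff measure (unnormalized = length in R^2) *)
Definition hausdorff_content1 (d : R) (A : set P) : \bar R :=
  ereal_inf [set (\sum_(0 <= i <oo) ediam (C i))%E |
             C in [set C : nat -> set P |
                   A `<=` \bigcup_i C i /\ forall i, (ediam (C i) <= d%:E)%E]].

Definition H1 (A : set P) : \bar R :=
  ereal_sup [set hausdorff_content1 d A | d in [set d : R | 0 < d]].

End Plane.

From Pilot Require Import Defs.
From HB Require Import structures.
From mathcomp Require Import all_boot all_order all_algebra.
From mathcomp Require Import all_classical all_reals all_analysis.
From mathcomp Require Import ring lra.
Import Order.TTheory GRing.Theory Num.Theory.
Import numFieldNormedType.Exports.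
Local Open Scope classical_set_scope.
Local Open Scope ring_scope.
Set Implicit Arguments. Unset Strict Implicit. Unset Printing Implicit Defensive.

(* Let l be the line through x0 attaining beta_E(x0, r0) and n its unit normal.
   As K is contained in E, K stays within eps r0 of l; what remains is to show that
   every y on l inside the ball lies within 4 eps r0 of K.  The orthogonal projection
   onto l is 1-Lipschitz, so the projection of E \ K has length at most
   H1(E \ K) <= eps r0 and misses some abscissa s at distance between eps r0 and
   5/2 eps r0 from y, on the side of x0.  The segment of abscissa s rising 3/2 eps r0
   on both sides of l stays in the ball and joins D+ to D-, so it meets E, hence K,
   at a point within sqrt(25/4 + 9/4) eps r0 < 4 eps r0 of y.  When eps >= 1/4 the
   point x0 of K is already close enough. *)

(* mathcomp-analysis also exports an [edist]; here it is the Euclidean one of Defs. *)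
Local Notation edist := Defs.edist.

Section RealBounds.
Variable R : realType.
Implicit Types (A : set R) (c x : R).

Lemma sup_le_ge0 A c : 0 <= c -> (forall x, A x -> x <= c) -> sup A <= c.
Proof.
move=> c_ge0 Ac; have [A0|A0] := pselect (A !=set0); first exact: ge_sup.
by rewrite (_ : A = set0) ?sup0 // -subset0 => x Ax; apply: A0; exists x.
Qed.

Lemma sup_ge0 A : (forall x, A x -> 0 <= x) -> 0 <= sup A.
Proof.
move=> A_ge0; have [[[x Ax] ubA]|supA] := pselect (has_sup A); last by rewrite sup_out.
exact: le_trans (A_ge0 x Ax) (ub_le_sup ubA Ax).
Qed.

Lemma inf_ge0 A : (forall x, A x -> 0 <= x) -> 0 <= inf A.
Proof.
move=> A_ge0; have [A0|A0] := pselect (A !=set0); first exact: lb_le_inf.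
by rewrite (_ : A = set0) ?inf0 // -subset0 => x Ax; apply: A0; exists x.
Qed.

Lemma inf_le_ge0 A x : (forall y, A y -> 0 <= y) -> A x -> inf A <= x.
Proof. by move=> A_ge0 Ax; apply: ge_inf => //; exists 0. Qed.

Lemma sqr_le_of_norm_le x c : `|x| <= c -> x ^+ 2 <= c ^+ 2.
Proof.
move=> xc; rewrite -real_normK ?num_real //.
by apply: lerXn2r; rewrite ?nnegrE // (le_trans _ xc).
Qed.

End RealBounds.

Section Deviations.
Variable R : realType.
Notation P := (R * R)%type.
Implicit Types (F G : set P) (u y : P) (c : R).

Lemma edist_ge0 (p q : P) : 0 <= edist p q.
Proof. exact: sqrtr_ge0. Qed.

Lemma edistC (p q : P) : edist p q = edist q p.
Proof. by rewrite /Defs.edist; congr Num.sqrt; ring. Qed.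

Lemma dist_set_ge0 y F : 0 <= dist_set y F.
Proof. by apply: inf_ge0 => _ [z _ <-]; exact: edist_ge0. Qed.

Lemma dist_set_le y F z : F z -> dist_set y F <= edist y z.
Proof. by move=> Fz; apply: inf_le_ge0 => [_ [w _ <-]|]; [exact: edist_ge0|exists z]. Qed.

Lemma line_center (x0 : P) u : line x0 u x0.
Proof. by exists 0; rewrite !mul0r !addr0; case: x0. Qed.

Lemma dotd_line (x0 u v y : P) : v.1 * u.1 + v.2 * u.2 = 0 -> line x0 u y ->
  dotd y x0 v = 0.
Proof.
move=> vu [t ->]; rewrite /dotd /=.
by transitivity (t * (v.1 * u.1 + v.2 * u.2)); [ring | rewrite vu mulr0].
Qed.

Lemma one_sided_dev_ge0 F (x0 : P) (r0 : R) u : 0 <= one_sided_dev F x0 r0 u.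
Proof. by apply: sup_ge0 => _ [y _ <-]; exact: dist_set_ge0. Qed.

Lemma le_one_sided_dev F G (x0 : P) (r0 : R) u : F `<=` G ->
  one_sided_dev F x0 r0 u <= one_sided_dev G x0 r0 u.
Proof.
move=> FG; apply: sup_le_ge0; first exact: one_sided_dev_ge0.
move=> _ [y [Fy y_in] <-]; apply: ub_le_sup; last by exists y => //; split => //; exact: FG.
exists r0 => _ [z [_ z_in] <-]; move: z_in; rewrite /oball /= edistC => z_in.
exact: le_trans (dist_set_le _ (line_center x0 u)) (ltW z_in).
Qed.

Lemma bil_dev_ge0 F (x0 : P) (r0 : R) u : 0 <= bil_dev F x0 r0 u.
Proof. by rewrite le_max one_sided_dev_ge0. Qed.

Lemma bil_dev_le F (x0 : P) (r0 : R) u c : 0 <= c -> one_sided_dev F x0 r0 u <= c ->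
  (forall y, line x0 u y -> oball x0 r0 y -> dist_set y F <= c) ->
  bil_dev F x0 r0 u <= c.
Proof.
move=> c_ge0 devF distF; rewrite ge_max devF /=.
by apply: sup_le_ge0 => // _ [y [uy y_in] <-]; exact: distF.
Qed.

Lemma beta_bil_le_bil_dev F (x0 : P) (r0 : R) u : 0 < r0 -> u != 0 ->
  beta_bil F x0 r0 <= r0^-1 * bil_dev F x0 r0 u.
Proof.
move=> r0_gt0 u0; rewrite /beta_bil ler_pM2l ?invr_gt0 //.
by apply: inf_le_ge0; [move=> _ [v _ <-]; exact: bil_dev_ge0 | exists u].
Qed.

End Deviations.

Section LipschitzImage.
Variable R : realType.
Notation P := (R * R)%type.
Local Open Scope ereal_scope.

Lemma ediam_ge0 (C : set P) : 0 <= ediam C.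
Proof. by apply: ereal_sup_ubound; left. Qed.

Lemma edist_le_ediam (C : set P) p q : C p -> C q -> (edist p q)%:E <= ediam C.
Proof. by move=> Cp Cq; apply: ereal_sup_ubound; right; exists p => //; exists q. Qed.

Variable f : P -> R.
Hypothesis f_lip : forall p q, (`|f p - f q| <= edist p q)%R.

(* Unlike [f @` C], this interval is measurable, and its length is at most [ediam C]. *)
Definition image_hull (C : set P) : set R :=
  if ediam C is r%:E then `[inf (f @` C), (inf (f @` C) + r)%R]%classic else setT.

Lemma measurable_image_hull (C : set P) :
  measurable (image_hull C : set (measurableTypeR R)).
Proof.
rewrite /image_hull; case: (ediam C) => [r| |]; first exact: measurable_itv.
all: exact: measurableT.
Qed.

Lemma image_sub_hull (C : set P) : f @` C `<=` image_hull C.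
Proof.
rewrite /image_hull; case dC : (ediam C) => [r| |] // _ [p Cp <-].
have fpq q : C q -> (`|f p - f q| <= r)%R.
  move=> Cq; rewrite -lee_fin -dC; apply: le_trans (edist_le_ediam Cp Cq).
  by rewrite lee_fin f_lip.
rewrite /= in_itv /=; apply/andP; split.
  apply: ge_inf; last by exists p.
  by exists (f p - r)%R => _ [q Cq <-]; have := fpq q Cq; rewrite ler_norml; lra.
rewrite -lerBlDr; apply: lb_le_inf; first by exists (f p), p.
by move=> _ [q Cq <-]; have := fpq q Cq; rewrite ler_norml; lra.
Qed.

Lemma lebesgue_image_hull (C : set P) :
  (@lebesgue_measure R) (image_hull C) <= ediam C.
Proof.
rewrite /image_hull; case dC : (ediam C) => [r| |]; last 2 first.
- exact: leey.
- by have := ediam_ge0 C; rewrite dC.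
rewrite lebesgue_measure_itv /=; case: ifPn => _; last by rewrite -dC ediam_ge0.
by rewrite lee_fin; lra.
Qed.

Lemma lipschitz_image_itv_le_H1 (A : set P) (c d : R) : (c < d)%R ->
  `[c, d]%classic `<=` f @` A -> (d - c)%:E <= H1 A.
Proof.
move=> cd cdA; apply: (@le_trans _ _ (hausdorff_content1 1 A)); last first.
  by apply: ereal_sup_ubound; exists 1%R => //=; rewrite ltr01.
apply: le_ereal_inf_tmp => _ [C [AC _] <-].
have cd_cover : `[c, d]%classic `<=` \bigcup_i image_hull (C i).
  move=> _ /cdA [p Ap <-]; have [i _ Cip] := AC p Ap.
  by exists i => //; apply: image_sub_hull; exists p.
have := lebesgue_measure_itv `[c, d]; rewrite /= lte_fin cd EFinB => <-.
apply: le_trans (measure_sigma_subadditive (@lebesgue_measure R)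
  (fun i => measurable_image_hull (C i)) (measurable_itv _) cd_cover) _.
apply: lee_nneseries => [i _ _|i _]; [exact: measure_ge0 | exact: lebesgue_image_hull].
Qed.

Lemma lipschitz_image_gap (A : set P) (c d : R) : (c < d)%R -> H1 A < (d - c)%:E ->
  exists2 s, (c <= s <= d)%R & ~ (f @` A) s.
Proof.
move=> cd A_small; apply: contrapT => no_gap.
have cdA : `[c, d]%classic `<=` f @` A.
  move=> s; rewrite /= in_itv /= => s_in; apply: contrapT => sA.
  by apply: no_gap; exists s.
by have := lipschitz_image_itv_le_H1 cd cdA; rewrite leNgt A_small.
Qed.

End LipschitzImage.

Section OrthonormalFrame.
Variable R : realType.
Notation P := (R * R)%type.
Variables (x0 w n : P).
Hypotheses (w_unit : w.1 ^+ 2 + w.2 ^+ 2 = 1) (n_unit : n.1 ^+ 2 + n.2 ^+ 2 = 1)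
  (wn_orth : w.1 * n.1 + w.2 * n.2 = 0).

Lemma frame_sqr_norm (v : P) :
  (v.1 * w.1 + v.2 * w.2) ^+ 2 + (v.1 * n.1 + v.2 * n.2) ^+ 2 = v.1 ^+ 2 + v.2 ^+ 2.
Proof.
(* [w] is [k = +-1] times the rotation of [n] by a right angle. *)
set k := w.1 * n.2 - w.2 * n.1.
have k2 : k ^+ 2 = 1.
  have : k ^+ 2 + (w.1 * n.1 + w.2 * n.2) ^+ 2
         = (w.1 ^+ 2 + w.2 ^+ 2) * (n.1 ^+ 2 + n.2 ^+ 2) by rewrite /k; ring.
  by rewrite wn_orth w_unit n_unit expr0n addr0 mulr1.
have w1E : w.1 = k * n.2.
  have : k * n.2 + (w.1 * n.1 + w.2 * n.2) * n.1 = w.1 * (n.1 ^+ 2 + n.2 ^+ 2).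
    by rewrite /k; ring.
  by rewrite wn_orth n_unit mul0r addr0 mulr1.
have w2E : w.2 = - k * n.1.
  have : - k * n.1 + (w.1 * n.1 + w.2 * n.2) * n.2 = w.2 * (n.1 ^+ 2 + n.2 ^+ 2).
    by rewrite /k; ring.
  by rewrite wn_orth n_unit mul0r addr0 mulr1.
rewrite w1E w2E; transitivity
  (k ^+ 2 * (v.1 * n.2 - v.2 * n.1) ^+ 2 + (v.1 * n.1 + v.2 * n.2) ^+ 2); first by ring.
by rewrite k2 mul1r -[RHS]mulr1 -n_unit; ring.
Qed.

Lemma edist_frame (p q : P) : edist p q =
  Num.sqrt ((dotd p x0 w - dotd q x0 w) ^+ 2 + (dotd p x0 n - dotd q x0 n) ^+ 2).
Proof.
rewrite /Defs.edist -(frame_sqr_norm (p.1 - q.1, p.2 - q.2)) /dotd /=.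
by congr Num.sqrt; ring.
Qed.

Lemma dotd_center (v : P) : dotd x0 x0 v = 0.
Proof. by rewrite /dotd !subrr !mul0r addr0. Qed.

Lemma lipschitz_dotd (p q : P) : `|dotd p x0 w - dotd q x0 w| <= edist p q.
Proof.
rewrite edist_frame -sqrtr_sqr ler_sqrt ?addr_ge0 ?sqr_ge0 //.
by rewrite lerDl sqr_ge0.
Qed.

Definition frame_pt (s t : R) : P :=
  (x0.1 + s * w.1 + t * n.1, x0.2 + s * w.2 + t * n.2).

Lemma dotd_frame_pt_w s t : dotd (frame_pt s t) x0 w = s.
Proof.
rewrite /dotd /=; transitivity
  (s * (w.1 ^+ 2 + w.2 ^+ 2) + t * (w.1 * n.1 + w.2 * n.2)); first by ring.
by rewrite w_unit wn_orth mulr1 mulr0 addr0.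
Qed.

Lemma dotd_frame_pt_n s t : dotd (frame_pt s t) x0 n = t.
Proof.
rewrite /dotd /=; transitivity
  (s * (w.1 * n.1 + w.2 * n.2) + t * (n.1 ^+ 2 + n.2 ^+ 2)); first by ring.
by rewrite n_unit wn_orth mulr1 mulr0 add0r.
Qed.

Lemma edist_center_frame_pt s t : edist x0 (frame_pt s t) = Num.sqrt (s ^+ 2 + t ^+ 2).
Proof. by rewrite edist_frame !dotd_center dotd_frame_pt_w dotd_frame_pt_n !sub0r !sqrrN. Qed.

Lemma connected_frame_segment s (I : set R) : connected I -> connected (frame_pt s @` I).
Proof.
move=> cI; apply: connected_continuous_connected cI _.
apply: continuous_subspaceT => t.
have line_cvg (a b : R) : a + t' * b @[t' --> t] --> a + t * b.
  by apply: cvgD; [exact: cvg_cst | apply: cvgMr_tmp; exact: cvg_id].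
exact: cvg_pair (line_cvg _ _) (line_cvg _ _).
Qed.

End OrthonormalFrame.

Definition separates_along (R : realType) (E : set (R * R)) (x0 : R * R) (r0 c : R)
    (n : R * R) : Prop :=
  ~ (exists C : set (R * R), [/\ C `<=` oball x0 r0 `\` E, connected C,
        C `&` [set z | oball x0 r0 z /\ dotd z x0 n > c] !=set0 &
        C `&` [set z | oball x0 r0 z /\ - dotd z x0 n > c] !=set0]).

Section Crossing.
Variable R : realType.
Notation P := (R * R)%type.
Variables (x0 w n : P) (r0 eps b : R) (K E : set P).
Hypotheses (w_unit : w.1 ^+ 2 + w.2 ^+ 2 = 1) (n_unit : n.1 ^+ 2 + n.2 ^+ 2 = 1)
  (wn_orth : w.1 * n.1 + w.2 * n.2 = 0).
Hypothesis E_separates : separates_along E x0 r0 (b * r0) n.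
Hypothesis H1_small : ((r0^-1)%:E * H1 (E `\` K) <= eps%:E)%E.

Local Notation pt := (frame_pt x0 w n).
Let distE := edist_frame x0 w_unit n_unit wn_orth.
Let pt_w := dotd_frame_pt_w x0 w_unit wn_orth.
Let pt_n := dotd_frame_pt_n x0 n_unit wn_orth.
Let center_distE := edist_center_frame_pt x0 w_unit n_unit wn_orth.

Lemma projection_gap c : 0 < r0 -> 0 < eps ->
  exists2 s, c - 5/2 * eps * r0 <= s <= c - eps * r0
  & ~ ((fun p => dotd p x0 w) @` (E `\` K)) s.
Proof.
move=> r0_gt0 eps_gt0; have er_gt0 := mulr_gt0 eps_gt0 r0_gt0.
apply: (lipschitz_image_gap (lipschitz_dotd x0 w_unit n_unit wn_orth)); first by lra.
move: H1_small; rewrite lee_pdivrMl // -EFinM => /le_lt_trans; apply.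
by rewrite lte_fin; lra.
Qed.

Lemma frame_segment_meets_E s : 0 < r0 -> 0 < eps -> 4 * eps < 1 -> b <= eps ->
  `|s| <= r0 - eps * r0 -> exists2 t, `|t| <= 3/2 * eps * r0 & E (pt s t).
Proof.
move=> r0_gt0 eps_gt0 eps_lt b_le /sqr_le_of_norm_le s2.
have er_gt0 := mulr_gt0 eps_gt0 r0_gt0; set h := 3/2 * eps * r0.
have pt_in t : `|t| <= h -> oball x0 r0 (pt s t).
  move=> /sqr_le_of_norm_le t2; rewrite /oball /= center_distE.
  rewrite -[X in _ < X](gtr0_norm r0_gt0) -sqrtr_sqr ltr_sqrt ?exprn_gt0 //.
  have : 0 < r0 ^+ 2 * eps * (2 - 13/4 * eps) by rewrite !mulr_gt0 ?exprn_gt0 //; lra.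
  by move: s2 t2; rewrite /h; lra.
have h_in : `|h| <= h by rewrite ger0_norm // /h; lra.
have hN_in : `|- h| <= h by rewrite normrN.
have br_lt : b * r0 < h by rewrite /h; nra.
apply: contrapT => noE; apply: E_separates.
exists (pt s @` `[- h, h]%classic); split.
- move=> _ [t t_in <-]; have t_le : `|t| <= h by rewrite ler_norml; move: t_in; rewrite /= in_itv.
  by split; [exact: pt_in | move=> Et; apply: noE; exists t].
- exact/connected_frame_segment/segment_connected.
- exists (pt s h); split; first by exists h => //=; rewrite in_itv /= -ler_norml.
  by split; [exact: pt_in | rewrite pt_n].
- exists (pt s (- h)); split; first by exists (- h) => //=; rewrite in_itv /= -ler_norml.
  by split; [exact: pt_in | rewrite pt_n opprK].
Qed.

Lemma near_point_in_K y : 0 < r0 -> 0 < eps -> 4 * eps < 1 -> b <= eps ->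
  oball x0 r0 y -> dotd y x0 n = 0 -> 0 <= dotd y x0 w ->
  exists2 z, K z & edist y z <= 4 * eps * r0.
Proof.
move=> r0_gt0 eps_gt0 eps_lt b_le y_in yn; set c := dotd y x0 w => c_ge0.
have er_gt0 := mulr_gt0 eps_gt0 r0_gt0.
have c_lt : c < r0.
  move: y_in; rewrite /oball /= distE !dotd_center yn subrr expr0n addr0.
  by rewrite sub0r sqrrN sqrtr_sqr ger0_norm.
have [s /andP[s_ge s_le] s_gap] := projection_gap c r0_gt0 eps_gt0.
have [|t t_le Et] := frame_segment_meets_E r0_gt0 eps_gt0 eps_lt b_le (s := s).
  have : 0 < r0 * (1 - 4 * eps) by rewrite mulr_gt0 // subr_gt0.
  by rewrite ler_norml; lra.
have Kst : K (pt s t).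
  by apply: contrapT => nK; apply: s_gap; exists (pt s t); rewrite ?pt_w.
exists (pt s t) => //.
rewrite distE pt_w pt_n yn -/c.
have cs2 : (c - s) ^+ 2 <= (5/2 * eps * r0) ^+ 2.
  by apply: sqr_le_of_norm_le; rewrite ler_norml; lra.
have t2 := sqr_le_of_norm_le t_le.
rewrite -[X in _ <= X]ger0_norm; last by lra.
by rewrite -sqrtr_sqr ler_sqrt ?sqr_ge0 // sub0r sqrrN; nra.
Qed.

End Crossing.

Lemma dist_set_le_of_separation (R : realType) (x0 n y : R * R) (r0 eps b : R)
    (K E : set (R * R)) :
  n.1 ^+ 2 + n.2 ^+ 2 = 1 -> separates_along E x0 r0 (b * r0) n ->
  ((r0^-1)%:E * H1 (E `\` K) <= eps%:E)%E -> K x0 ->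
  0 < r0 -> 0 < eps -> b <= eps ->
  oball x0 r0 y -> dotd y x0 n = 0 -> dist_set y K <= 4 * eps * r0.
Proof.
move=> n_unit E_sep H1_le Kx0 r0_gt0 eps_gt0 b_le y_in y_n.
have [eps_ge|eps_lt] := leP 1 (4 * eps).
  apply: le_trans (dist_set_le _ Kx0) _; rewrite edistC.
  by apply: le_trans (ltW y_in) _; rewrite ler_peMl // ltW.
have [w [w_unit w_orth y_w]] : exists w : R * R, [/\ w.1 ^+ 2 + w.2 ^+ 2 = 1,
    w.1 * n.1 + w.2 * n.2 = 0 & 0 <= dotd y x0 w].
  have [y_w|y_w] := leP 0 (dotd y x0 (- n.2, n.1)).
    by exists (- n.2, n.1); split => //=; [rewrite sqrrN addrC | ring].
  exists (n.2, - n.1); split => /=; [by rewrite sqrrN addrC | by ring |].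
  by move: y_w; rewrite /dotd /=; lra.
have [z Kz yz] := near_point_in_K w_unit n_unit w_orth E_sep H1_le
  r0_gt0 eps_gt0 eps_lt b_le y_in y_n y_w.
exact: le_trans (dist_set_le _ Kz) yz.
Qed.

Theorem lemma4p16 (R : realType) (x0 : R * R) (r0 eps : R)
    (K E : set (R * R)) :
  0 < r0 ->
  rel_closed K (oball x0 r0) -> K x0 ->
  0 < eps ->
  rel_closed E (oball x0 r0) ->
  K `<=` E ->
  separates E x0 r0 ->
  beta E x0 r0 <= eps ->
  ((r0^-1)%:E * H1 (E `\` K) <= eps%:E)%E ->
  beta_bil K x0 r0 <= 4 * eps.
Proof.
move=> r0_gt0 _ Kx0 eps_gt0 _ KE [_ [u [nu [u0 u_opt nu_unit u_orth E_sep]]]] beta_le H1_le.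
have devK : one_sided_dev K x0 r0 u <= eps * r0.
  apply: le_trans (le_one_sided_dev x0 r0 u KE) _.
  by rewrite u_opt -[inf _]mul1r -(mulVf (lt0r_neq0 r0_gt0)) mulrAC ler_pM2r.
apply: le_trans (beta_bil_le_bil_dev _ _ r0_gt0 u0) _.
rewrite ler_pdivrMl // mulrC; apply: bil_dev_le.
- by rewrite mulr_ge0 ?mulr_ge0 // ltW.
- by apply: le_trans devK _; rewrite ler_pM2r //; lra.
move=> y y_u y_in.
exact: dist_set_le_of_separation nu_unit E_sep H1_le Kx0 r0_gt0 eps_gt0 beta_le y_in
  (dotd_line u_orth y_u).
Qed.
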